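(* Let $E$ be a real Banach space, $K\subset E$ nonempty, closed and convex, and $g\in\mathcal F$ a totally convex function on $E$ satisfying H1–H2. If $T:K\to\mathcal P(K)$ is a multivalued mapping with nonempty, closed, convex values which is quasi $D_g$-nonexpansive, then $\mathrm{Fix}(T)$ is closed and convex.
   Context: $\mathcal F$ is the family of functions $g:E\to\mathbb R$ that are strictly convex, lower semicontinuous and Gâteaux differentiable, with derivative $g'$. $D_g(x,y)=g(x)-g(y)-\langle x-y,g'(y)\rangle$. $v_g(x,t)=\inf\{D_g(y,x):\|y-x\|=t\}$; $g$ is totally convex if $v_g(x,t)>0$ for all $x\in E$, $t>0$; uniformly totally convex on $E$ if $\inf_{x\in A}v_g(x,t)>0$ for every $t>0$ and bounded $A\subset E$. H1: the level sets of $D_g(x,\cdot)$ are bounded for all $x$; H2: $g$ is uniformly totally convex on $E$. For nonempty closed convex $D\subset E$, $\Pi^g_D(x)$ denotes the unique minimizer of $D_g(\cdot,x)$ over $D$ (Bregman projection). $\mathrm{Fix}(T)=\{x\in K: x\in T(x)\}$. $T$ is quasi $D_g$-nonexpansive if $S(x):=\Pi^g_{T(x)}(x)$ satisfies $\mathrm{Fix}(S)\ne\emptyset$ and $D_g(p,S(x))\le D_g(p,x)$ for all $p\in\mathrm{Fix}(S)$, $x\in K$. *)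

From HB Require Import structures.
From mathcomp Require Import all_boot all_order all_algebra.
From mathcomp Require Import all_classical all_reals all_analysis.
Set Implicit Arguments. Unset Strict Implicit. Unset Printing Implicit Defensive.
Import Order.TTheory GRing.Theory Num.Theory.
Import numFieldNormedType.Exports.
Local Open Scope classical_set_scope.
Local Open Scope ring_scope.

Section Bregman.
Context {R : realType} {E : normedModType R}.

Definition convex (A : set E) : Prop :=
  forall x y (t : R), A x -> A y -> 0 <= t -> t <= 1 -> A (t *: x + (1 - t) *: y).

Definition strictly_convex (g : E -> R) : Prop :=
  forall x y (t : R), x != y -> 0 < t -> t < 1 ->
    g (t *: x + (1 - t) *: y) < t * g x + (1 - t) * g y.

(* g' y : the Gateaux derivative of g at y, as a function E -> R (v |-> <v, g'(y)>) *)
Definition gderiv (g : E -> R^o) (y : E) : E -> R := fun v => derive g y v.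

Definition gateaux_differentiable (g : E -> R^o) : Prop :=
  forall y : E,
    (forall v, derivable g y v) /\
    (forall u v, gderiv g y (u + v) = gderiv g y u + gderiv g y v) /\
    (forall (a : R) v, gderiv g y (a *: v) = a * gderiv g y v) /\
    continuous (gderiv g y).

Definition in_F (g : E -> R^o) : Prop :=
  strictly_convex g /\ lower_semicontinuous (fun x => (g x)%:E) /\
  gateaux_differentiable g.

Definition bregman (g : E -> R^o) (x y : E) : R :=
  g x - g y - gderiv g y (x - y).

(* modulus of total convexity, with inf over the empty set = +oo *)
Definition total_conv_modulus (g : E -> R^o) (x : E) (t : R) : \bar R :=
  ereal_inf [set (bregman g y x)%:E | y in [set y | `|y - x| = t]].

Definition totally_convex (g : E -> R^o) : Prop :=
  forall x (t : R), 0 < t -> (0 < total_conv_modulus g x t)%E.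

Definition uniformly_totally_convex (g : E -> R^o) : Prop :=
  forall (t : R) (A : set E), 0 < t -> bounded_set A ->
    (0 < ereal_inf [set total_conv_modulus g x t | x in A])%E.

Definition H1 (g : E -> R^o) : Prop :=
  forall x (r : R), bounded_set [set y | bregman g x y <= r].

Definition H2 (g : E -> R^o) : Prop := uniformly_totally_convex g.

Definition is_bregman_proj (g : E -> R^o) (D : set E) (x p : E) : Prop :=
  D p /\ forall y, D y -> bregman g p x <= bregman g y x.

Definition bregman_proj (g : E -> R^o) (D : set E) (x : E) : E :=
  get (is_bregman_proj g D x).

Definition Fix (K : set E) (T : E -> set E) : set E := [set x | K x /\ T x x].

Definition FixS (K : set E) (S : E -> E) : set E := [set x | K x /\ S x = x].

Definition quasi_Dg_nonexpansive (g : E -> R^o) (K : set E) (T : E -> set E) : Prop :=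
  let S := fun x => bregman_proj g (T x) x in
  FixS K S !=set0 /\
  forall p x, FixS K S p -> K x -> bregman g p (S x) <= bregman g p x.

End Bregman.

From HB Require Import structures.
From mathcomp Require Import all_boot all_order all_algebra.
From mathcomp Require Import all_classical all_reals all_analysis.
From mathcomp Require Import ring lra.
Import Order.TTheory GRing.Theory Num.Theory.
Import numFieldNormedType.Exports.
Local Open Scope classical_set_scope.
Local Open Scope ring_scope.

(* For x in K let S x be the Bregman projection of x onto T x.  A point p of K
   is fixed iff D(p, S p) <= D(p, p) = 0, so quasi D_g-nonexpansiveness makes
   Fix T the intersection of K with the sets {q | D(q, S x) <= D(q, x)}, x in K.
   The g(q) terms cancel in q |-> D(q, S x) - D(q, x), which is therefore
   continuous and affine: every set in the intersection is a closed half-space.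
   What remains is the existence of S x: a minimising sequence of D(., x) over
   the closed convex set T x is Cauchy, because the three-point identity for the
   midpoint m of two nearly minimising points a, b makes D(a, m) and D(b, m)
   small, and uniform total convexity (H2) on a bounded sublevel set turns this
   into smallness of |a - m| and |b - m|. *)

Lemma convex_combB {R : pzRingType} {V : lmodType R} (a b w : V) (t : R) :
  t *: a + (1 - t) *: b - w = t *: (a - w) + (1 - t) *: (b - w).
Proof. by rewrite !scalerBr addrACA -opprD -scalerDl subrKC scale1r. Qed.

Lemma ereal_inf_gt0_lbound {R : realType} {S : set \bar R} :
  (0 < ereal_inf S)%E -> exists2 c : R, 0 < c & forall s, S s -> (c%:E <= s)%E.
Proof.
case hS: (ereal_inf S) => [r| |] // r0.
- by exists r => // s Ss; rewrite -hS; apply: ereal_inf_lbound.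
- exists 1 => // s Ss.
  by have := ereal_inf_lbound Ss; rewrite hS leye_eq => /eqP ->; rewrite leey.
Qed.

Lemma bounded_set_dist_le {R : realType} {E : normedModType R} (A : set E) x M :
  (forall y, A y -> `|y - x| <= M) -> bounded_set A.
Proof.
move=> AM; rewrite /bounded_set /= /bounded_near; near=> r => y /AM yM /=.
have : `|y| <= `|y - x| + `|x| by rewrite -[X in `|X|](subrK x) ler_normD.
have : `|x| + M <= r by near: r; apply: nbhs_pinfty_ge; rewrite num_real.
lra.
Unshelve. all: by end_near.
Qed.

Lemma convexI {R : realType} {E : normedModType R} (A B : set E) :
  convex A -> convex B -> convex (A `&` B).
Proof. by move=> cA cB x y t [Ax Bx] [Ay By] t0 t1; split; [apply: cA|apply: cB]. Qed.

Lemma convex_bigcap {R : realType} {E : normedModType R} {I : Type} (D : set I)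
    (F : I -> set E) :
  (forall i, D i -> convex (F i)) -> convex (\bigcap_(i in D) F i).
Proof. by move=> cF x y t Fx Fy t0 t1 i Di; apply: cF => //; [apply: Fx|apply: Fy]. Qed.

Section Bregman.
Context {R : realType} {E : normedModType R} (g : E -> R^o).
Hypothesis gF : in_F g.

Local Notation L := (gderiv g).
Local Notation D := (bregman g).

Lemma gderivD w u v : L w (u + v) = L w u + L w v.
Proof. by have [_ [+ _]] := gF.2.2 w; apply. Qed.

Lemma gderivZ w a v : L w (a *: v) = a * L w v.
Proof. by have [_ [_ [+ _]]] := gF.2.2 w; apply. Qed.

Lemma continuous_gderiv w : continuous (L w).
Proof. by have [_ [_ []]] := gF.2.2 w. Qed.

Lemma gderiv0 w : L w 0 = 0.
Proof. by rewrite -(scale0r 0) gderivZ mul0r. Qed.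

Lemma gderivB w u v : L w (u - v) = L w u - L w v.
Proof. by rewrite -scaleN1r gderivD gderivZ mulN1r. Qed.

Lemma bregmanxx x : D x x = 0.
Proof. by rewrite /bregman !subrr gderiv0 subrr. Qed.

Lemma in_F_convex a b t : 0 <= t -> t <= 1 ->
  g (t *: a + (1 - t) *: b) <= t * g a + (1 - t) * g b.
Proof.
rewrite le_eqVlt => /predU1P[<- _|t0].
  by rewrite scale0r add0r subr0 scale1r mul0r add0r mul1r.
rewrite le_eqVlt => /predU1P[->|t1].
  by rewrite scale1r subrr scale0r addr0 mul1r mul0r addr0.
have [->|ab] := eqVneq a b; last exact/ltW/gF.1.
by rewrite -scalerDl -mulrDl subrKC scale1r mul1r.
Qed.

Lemma bregman_convex_comb a b w t :
  t * D a w + (1 - t) * D b w =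
  t * g a + (1 - t) * g b - g (t *: a + (1 - t) *: b) + D (t *: a + (1 - t) *: b) w.
Proof. by rewrite /bregman (convex_combB a b w) (gderivD w (t *: _)) !gderivZ; ring. Qed.

Lemma bregman_convex a b x t : 0 <= t -> t <= 1 ->
  D (t *: a + (1 - t) *: b) x <= t * D a x + (1 - t) * D b x.
Proof.
move=> t0 t1; rewrite bregman_convex_comb.
by have := in_F_convex a b t t0 t1; lra.
Qed.

Lemma bregmanB_convex_comb a b w x t :
  D (t *: a + (1 - t) *: b) w - D (t *: a + (1 - t) *: b) x =
  t * (D a w - D a x) + (1 - t) * (D b w - D b x).
Proof.
rewrite /bregman (convex_combB a b w) (convex_combB a b x).
by rewrite (gderivD w (t *: _)) (gderivD x (t *: _)) !gderivZ; ring.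
Qed.

Lemma continuous_bregmanB w x : continuous (fun q => D q w - D q x).
Proof.
have -> : (fun q => D q w - D q x) =
    fun q => g x - g w + L w w - L x x + (L x q - L w q).
  by apply: funext => q; rewrite /bregman !gderivB; ring.
move=> q; apply: cvgD; first exact: cvg_cst.
by apply: cvgB; apply: continuous_gderiv.
Qed.

Definition bregman_halfspace (w x : E) : set E := [set q | D q w <= D q x].

Lemma closed_bregman_halfspace w x : closed (bregman_halfspace w x).
Proof.
have -> : bregman_halfspace w x = (fun q => D q w - D q x) @^-1` [set r | r <= 0].
  by apply/seteqP; split => q /=; rewrite subr_le0.
exact: (continuous_closedP _).1 (continuous_bregmanB w x) _ (@closed_le _ 0).
Qed.

Lemma convex_bregman_halfspace w x : convex (bregman_halfspace w x).
Proof.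
move=> a b t; rewrite /bregman_halfspace /= => ha hb t0 t1.
rewrite -subr_le0; rewrite -subr_le0 in ha; rewrite -subr_le0 in hb.
have t1' : 0 <= 1 - t by rewrite subr_ge0.
rewrite bregmanB_convex_comb -[0]addr0.
by apply: lerD; apply: mulr_ge0_le0.
Qed.

Lemma lower_semicontinuous_bregman x : lower_semicontinuous (fun q => (D q x)%:E).
Proof.
move=> p a; rewrite lte_fin => apx.
pose b := (D p x - a) / 2.
have b0 : 0 < b by rewrite divr_gt0 // subr_gt0.
have near_g : \forall q \near p, g p - b < g q.
  have gpb : ((g p - b)%:E < (g p)%:E)%E by rewrite lte_fin ltrBlDr ltrDl.
  have [V nV hV] := gF.2.1 p (g p - b) gpb.
  by apply: filterS nV => q /hV; rewrite lte_fin.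
have near_L : \forall q \near p, L x q < L x p + b.
  by apply: (cvgr_lt _ (continuous_gderiv x p)); rewrite ltrDl.
exists [set q | g p - b < g q /\ L x q < L x p + b]; first exact: filterI.
move=> q [gq Lq]; rewrite lte_fin.
by move: gq Lq; rewrite /b /bregman !gderivB; lra.
Qed.

Lemma closed_bregman_sublevel x r : closed [set q | D q x <= r].
Proof.
have -> : [set q | D q x <= r] = ~` [set q | r%:E < (D q x)%:E]%E.
  by apply/seteqP; split => q /=; rewrite lte_fin leNgt => /negP.
exact/open_closedC/(lower_semicontinuousP _).1/lower_semicontinuous_bregman.
Qed.

Lemma total_conv_modulus_le u z : (total_conv_modulus g u `|z - u|%R <= (D z u)%:E)%E.
Proof. by apply: ereal_inf_lbound; exists z. Qed.

Lemma bregman_growth {u} {t c : R} : 0 < t ->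
    (forall z, `|z - u| = t -> c <= D z u) ->
  forall y, t <= `|y - u| -> c * `|y - u| <= t * D y u.
Proof.
move=> t0 sphere_c y ty.
have s0 : 0 < `|y - u| by apply: lt_le_trans ty.
pose l := t / `|y - u|.
have l0 : 0 <= l by rewrite divr_ge0 // ltW.
have l1 : l <= 1 by rewrite ler_pdivrMr // mul1r.
have zu : `|l *: y + (1 - l) *: u - u| = t.
  by rewrite convex_combB subrr scaler0 addr0 normrZ ger0_norm // divfK ?gt_eqF.
have := bregman_convex y u u l l0 l1; rewrite bregmanxx mulr0 addr0 => Dz.
by rewrite -ler_pdivlMr // mulrAC; apply: le_trans (sphere_c _ zu) Dz.
Qed.

Hypothesis gTC : totally_convex g.

Lemma bregman_gt0 x y : y != x -> 0 < D y x.
Proof.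
move=> yx; rewrite -lte_fin; apply: lt_le_trans (total_conv_modulus_le x y).
by apply: gTC; rewrite normr_gt0 subr_eq0.
Qed.

Lemma bregman_ge0 x y : 0 <= D y x.
Proof. by have [->|/bregman_gt0/ltW//] := eqVneq y x; rewrite bregmanxx. Qed.

Lemma bregman_le0_eq x y : D y x <= 0 -> y = x.
Proof. by apply: contraPeq => /bregman_gt0; rewrite ltNge => /negP. Qed.

Lemma is_bregman_proj_id (C : set E) x p : C x -> is_bregman_proj g C x p -> p = x.
Proof. by move=> Cx [_ /(_ x Cx)]; rewrite bregmanxx => /bregman_le0_eq. Qed.

Lemma bounded_bregman_sublevel x r : bounded_set [set y | D y x <= r].
Proof.
have [c c0 hc] := ereal_inf_gt0_lbound (gTC x 1 ltr01).
have sphere_c z : `|z - x| = 1 -> c <= D z x.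
  by move=> zx; rewrite -lee_fin; apply: hc; exists z.
apply: (@bounded_set_dist_le _ _ _ x (Num.max 1 (r / c))) => y /= yr.
rewrite le_max; have [//|/ltW y1] := leP `|y - x| 1.
have := bregman_growth ltr01 sphere_c y y1; rewrite mul1r => cy.
by rewrite ler_pdivlMr // mulrC (le_trans cy) ?orbT.
Qed.

Lemma uniformly_totally_convex_dist_lt (A : set E) (e : R) :
    uniformly_totally_convex g -> bounded_set A -> 0 < e ->
  exists2 c, 0 < c & forall u y, A u -> D y u < c -> `|y - u| < e.
Proof.
move=> utc bA e0; have [c c0 hc] := ereal_inf_gt0_lbound (utc e A e0 bA).
exists c => // u y Au Dyu; rewrite ltNge; apply/negP => ey.
have sphere_c z : `|z - u| = e -> c <= D z u.
  move=> zu; rewrite -lee_fin; apply: le_trans (total_conv_modulus_le u z).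
  by rewrite zu; apply: hc; exists u.
have := bregman_growth e0 sphere_c y ey.
have : c * e <= c * `|y - u| by rewrite ler_pM2l.
nra.
Qed.

Lemma bregman_midpoint_lt {C : set E} {x} {d e : R} {a b} :
    convex C -> (forall y, C y -> d <= D y x) -> C a -> C b ->
    D a x < d + e -> D b x < d + e ->
  exists m, [/\ C m, D m x < d + e, D a m < 2 * e & D b m < 2 * e].
Proof.
move=> cvC d_le Ca Cb ax bx.
pose m := 2^-1 *: a + (1 - 2^-1) *: b.
have Cm : C m by apply: cvC; rewrite ?invr_ge0 ?invf_le1 ?ler1n.
have split_mx : 2^-1 * D a m + (1 - 2^-1) * D b m + D m x =
                2^-1 * D a x + (1 - 2^-1) * D b x.
  by rewrite !bregman_convex_comb -/m bregmanxx addr0.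
exists m; move: split_mx (d_le m Cm) (bregman_ge0 m a) (bregman_ge0 m b) ax bx.
move: (D a m) (D b m) (D m x) (D a x) (D b x) => am bm mx ax' bx'.
by split => //; lra.
Qed.

Lemma bregman_minimizing_cauchy {C : set E} {x} {d : R} {y_ : nat -> E} :
    uniformly_totally_convex g -> convex C -> (forall y, C y -> d <= D y x) ->
    (forall n, C (y_ n) /\ D (y_ n) x < d + n.+1%:R^-1) ->
  cauchy (y_ @ \oo).
Proof.
move=> utc cvC d_le y_P; apply: cauchy_exP => e e0.
have [c c0 close] := uniformly_totally_convex_dist_lt _ _ utc
  (bounded_bregman_sublevel x (d + 1)) (divr_gt0 e0 (ltr0Sn _ 1)).
have [N _ /(_ N (leqnn N))] := near_infty_natSinv_lt (PosNum (divr_gt0 c0 (ltr0Sn _ 1))).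
rewrite /= ltr_pdivlMr // mulrC => Nc.
exists (y_ N), N => // n /= Nn; rewrite -ball_normE /=.
have [[CN yN] [Cn yn]] := (y_P N, y_P n).
have [|m [Cm mx Nm nm]] := bregman_midpoint_lt cvC d_le CN Cn yN.
  by apply: lt_le_trans yn _; rewrite lerD2l lef_pV2 ?posrE // ler_nat ltnS.
have Am : D m x <= d + 1.
  by apply/ltW/(lt_le_trans mx); rewrite lerD2l invf_le1 ?ler1n.
have closeN := close m (y_ N) Am (lt_trans Nm Nc).
have closen := close m (y_ n) Am (lt_trans nm Nc).
apply: le_lt_trans (ler_distD m _ _) _.
by rewrite [e]splitr (distrC m); apply: ltrD.
Qed.

Lemma Fix_eq_bregman_halfspaces {K : set E} {T : E -> set E} :
    (forall x, K x -> is_bregman_proj g (T x) x (bregman_proj g (T x) x)) ->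
    quasi_Dg_nonexpansive g K T ->
  Fix K T = K `&` \bigcap_(x in K) bregman_halfspace (bregman_proj g (T x) x) x.
Proof.
move=> projT [_ /= nonexp]; apply/seteqP; split => [p [Kp Tpp]|p [Kp]].
  split => // x Kx; apply: nonexp Kx; split => //.
  exact: is_bregman_proj_id Tpp (projT p Kp).
move=> /(_ p Kp); rewrite /bregman_halfspace /= bregmanxx => /bregman_le0_eq pSp.
by split => //; have [+ _] := projT p Kp; rewrite -pSp.
Qed.

End Bregman.

Lemma exists_bregman_proj {R : realType} {E : completeNormedModType R} (g : E -> R^o)
    (C : set E) x :
    in_F g -> totally_convex g -> uniformly_totally_convex g ->
    C !=set0 -> closed C -> convex C ->
  exists p, is_bregman_proj g C x p.
Proof.
move=> gF gTC utc [y0 Cy0] clC cvC.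
pose V := [set bregman g y x | y in C].
have hV : has_inf V.
  by split; [exists (bregman g y0 x), y0|exists 0 => _ [y _ <-]; apply: bregman_ge0].
have d_le y : C y -> inf V <= bregman g y x by move=> Cy; apply: (ge_inf hV.2); exists y.
have /choice[y_ y_P] n : exists y, C y /\ bregman g y x < inf V + n.+1%:R^-1.
  have n0 : 0 < n.+1%:R^-1 :> R by rewrite invr_gt0.
  by have [_ [y Cy <-] ?] := inf_adherent n0 hV; exists y.
have /cvg_ex[p y_p] : cvg (y_ @ \oo).
  exact: cauchy_cvg (bregman_minimizing_cauchy g gF gTC utc cvC d_le y_P).
have Cp : C p by apply: (closed_cvg _ clC _ _ y_p); apply: nearW => n; case: (y_P n).
exists p; split => // y Cy; apply: le_trans (d_le y Cy).
apply/ler_addgt0Pr => e e0.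
apply: (closed_cvg _ (closed_bregman_sublevel g gF x _) _ _ y_p).
near=> n; apply: ltW; apply: lt_le_trans (y_P n).2 _; rewrite lerD2l ltW //.
by near: n; apply: (near_infty_natSinv_lt (PosNum e0)).
Unshelve. all: by end_near.
Qed.

Theorem proposition2p10 (R : realType) (E : completeNormedModType R)
  (K : set E) (g : E -> R^o) (T : E -> set E) :
  K !=set0 -> closed K -> convex K ->
  in_F g -> totally_convex g -> H1 g -> H2 g ->
  (forall x, K x -> [/\ T x !=set0, T x `<=` K, closed (T x) & convex (T x)]) ->
  quasi_Dg_nonexpansive g K T ->
  closed (Fix K T) /\ convex (Fix K T).
Proof.
move=> _ clK cvK gF gTC _ utc hT nonexp.
have projT x : K x -> is_bregman_proj g (T x) x (bregman_proj g (T x) x).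
  move=> Kx; apply: getPex; have [T0 _ clT cvT] := hT x Kx.
  exact: exists_bregman_proj.
rewrite (Fix_eq_bregman_halfspaces g gF gTC projT nonexp); split.
- apply: closedI clK _; apply: closed_bigI => x _.
  exact: closed_bregman_halfspace.
- apply: convexI cvK _; apply: convex_bigcap => x _.
  exact: convex_bregman_halfspace.
Qed.
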